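(* Let $q=2^h$, let $A,B,C,D\in\mathbb F_{q^4}$ with $B\ne 0$ and $B^{q^2}=1/B$, and let $$\Lambda=\{(u,v)\in\mathbb F_{q^4}^2 : v^{q^2}+Au+Bv+u^q=0,\ v^{q^2}+u^{q^2}+v^q+Cu+Dv=0\}.$$ Then $\#\Lambda\le q^3$. *)

From mathcomp Require Import all_boot all_algebra all_field.
Set Implicit Arguments. Unset Strict Implicit. Unset Printing Implicit Defensive.
Import GRing.Theory.
Local Open Scope ring_scope.

Definition Lambda (F : finFieldType) (q : nat) (A B C D : F) : {set F * F} :=
  [set uv : F * F |
     (uv.2 ^+ (q ^ 2)%N + A * uv.1 + B * uv.2 + uv.1 ^+ q == 0) &&
     (uv.2 ^+ (q ^ 2)%N + uv.1 ^+ (q ^ 2)%N + uv.2 ^+ q + C * uv.1 + D * uv.2 == 0)].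

(* Let s be the Frobenius map x |-> x^q, so that s^4 = id on F_{q^4}.  Applying
   s^2 to the first equation and using s^2 B = B^-1 eliminates v: u is a root of
   a q-polynomial of degree q^3.  Applying s to the sum of the two equations and
   eliminating s^2 v and s v gives c v = L(u) with c = s(B+D)(B+D) + B.  If c != 0,
   v is determined by u, so #Lambda <= q^3.  If c = 0, L(u) = 0 and the first
   relation combine into a q-polynomial of degree q^2 in u, which is nonzero
   (its vanishing would make an inconsistent system for B + D); for each such u
   the sum of the two equations, of degree q in v, leaves at most q values of v. *)

From HB Require Import structures.
From mathcomp Require Import all_boot all_algebra all_field.
From mathcomp Require Import ring.

Set Implicit Arguments.
Unset Strict Implicit.
Unset Printing Implicit Defensive.

Import GRing.Theory.
Local Open Scope ring_scope.

Lemma lincomb2_eq0 (R : comPzRingType) (x y1 y2 k1 k2 : R) :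
  y1 = 0 -> y2 = 0 -> x = k1 * y1 + k2 * y2 -> x = 0.
Proof. by move=> -> -> ->; rewrite !mulr0 addr0. Qed.

Lemma lincomb3_eq0 (R : comPzRingType) (x y1 y2 y3 k1 k2 k3 : R) :
  y1 = 0 -> y2 = 0 -> y3 = 0 -> x = k1 * y1 + k2 * y2 + k3 * y3 -> x = 0.
Proof. by move=> -> -> -> ->; rewrite !mulr0 !addr0. Qed.

Section FrobeniusPower.

Variables (R : comNzSemiRingType) (q : nat).

Definition frobenius_pow of [pchar R].-nat q := fun x : R => x ^+ q.

Variable pcharRq : [pchar R].-nat q.

Lemma frobenius_powE x : frobenius_pow pcharRq x = x ^+ q.
Proof. by []. Qed.

Lemma frobenius_pow_is_nmod_morphism : nmod_morphism (frobenius_pow pcharRq).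
Proof.
split=> [|x y]; last exact: exprDn_pchar.
by rewrite frobenius_powE expr0n gtn_eqF //; case/andP: pcharRq.
Qed.

Lemma frobenius_pow_is_monoid_morphism : monoid_morphism (frobenius_pow pcharRq).
Proof. by split=> [|x y]; rewrite !frobenius_powE ?expr1n ?exprMn. Qed.

HB.instance Definition _ := GRing.isNmodMorphism.Build R R (frobenius_pow pcharRq)
  frobenius_pow_is_nmod_morphism.
HB.instance Definition _ := GRing.isMonoidMorphism.Build R R (frobenius_pow pcharRq)
  frobenius_pow_is_monoid_morphism.

End FrobeniusPower.

(* For s = (fun x => x ^+ q) this is the q-polynomial sum_i c_i x^(q^i). *)
Definition linearized (R : pzSemiRingType) (s : R -> R) (c : seq R) (x : R) : R :=
  \sum_(i < size c) c`_i * iter i s x.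

Lemma linearized_nil (R : pzSemiRingType) (s : R -> R) x : linearized s [::] x = 0.
Proof. by rewrite /linearized big_ord0. Qed.

Lemma linearized_cons (R : pzSemiRingType) (s : R -> R) a c x :
  linearized s (a :: c) x = a * x + linearized s c (s x).
Proof. by rewrite /linearized big_ord_recl; under eq_bigr do rewrite iterSr. Qed.

Lemma iter_expr (R : pzSemiRingType) (q n : nat) (x : R) :
  iter n (fun y => y ^+ q) x = x ^+ (q ^ n).
Proof. by elim: n => [|n IHn]; rewrite ?expr1 // iterS IHn -exprM expnSr. Qed.

Section LinearizedRoots.

Variables (F : finFieldType) (q : nat).
Hypothesis q_gt1 : (1 < q)%N.

Lemma card_linearized_eq_le (c : seq F) (k : F) :
  has (fun a => a != 0) c ->
  (#|[set x : F | linearized (fun y => y ^+ q) c x == k]| <= q ^ (size c).-1)%N.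
Proof.
move=> /(has_nthP 0)[i ltic ci_neq0]; set n := (size c).-1.
pose p : {poly F} := \sum_(j < size c) c`_j *: 'X^(q ^ j) - k%:P.
have coef_p m : p`_m = \sum_(j < size c) c`_j * (m == (q ^ j)%N)%:R - (m == 0%N)%:R * k.
  rewrite coefB coef_sum coefC; under eq_bigr do rewrite coefZ coefXn.
  by case: eqP; rewrite ?mul1r ?mul0r.
have q_gt0 : (0 < q)%N by apply: ltnW.
have p_neq0 : p != 0.
  apply: (contra_neq _ ci_neq0) => /(congr1 (fun r : {poly F} => r`_(q ^ i))).
  rewrite coef_p coef0 gtn_eqF ?expn_gt0 ?q_gt0 // mul0r subr0.
  rewrite (bigD1 (Ordinal ltic)) //= eqxx mulr1 big1 ?addr0 // => j /negbTE neq_ji.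
  by rewrite eqn_exp2l // eq_sym -[i]/(val (Ordinal ltic)) val_eqE neq_ji mulr0.
have size_p : (size p <= (q ^ n).+1)%N.
  apply/leq_sizeP => m lt_m; rewrite coef_p gtn_eqF ?(leq_ltn_trans _ lt_m) // mul0r subr0.
  rewrite big1 // => j _; rewrite gtn_eqF ?mulr0 // (leq_ltn_trans _ lt_m) //.
  by rewrite leq_pexp2l // -ltnS (leq_trans (ltn_ord j)) // leqSpred.
have rootP x : root p x = (linearized (fun y => y ^+ q) c x == k).
  rewrite /root /p hornerD hornerN hornerC horner_sum subr_eq0 /linearized.
  by under eq_bigr do rewrite hornerZ hornerXn -iter_expr.
have all_roots : all (root p) (enum [set x | root p x]).
  by apply/allP => x; rewrite mem_enum inE.
have := max_poly_roots p_neq0 all_roots (enum_uniq _); rewrite -cardE => card_lt.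
have -> : [set x | linearized (fun y => y ^+ q) c x == k] = [set x | root p x].
  by apply/setP => x; rewrite !inE rootP.
by rewrite -ltnS (leq_trans card_lt size_p).
Qed.

End LinearizedRoots.

Lemma addr_eq0_pchar2 (R : nzRingType) (pcharR2 : 2 \in [pchar R]) {x y : R} :
  x + y = 0 <-> x = y.
Proof.
split=> [/eqP|->]; last exact: addrr_pchar2.
by rewrite addr_eq0 (oppr_pchar2 pcharR2) => /eqP.
Qed.

Lemma card_le_fibers (T1 T2 : finType) (S : {set T1 * T2}) (U : {set T1}) (m : nat) :
  (forall x y, (x, y) \in S -> x \in U) ->
  (forall x, x \in U -> #|[set y | (x, y) \in S]| <= m)%N ->
  (#|S| <= #|U| * m)%N.
Proof.
move=> SU fiber_le.
have -> : #|S| = (\sum_x #|[set y | (x, y) \in S]|)%N.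
  rewrite -sum1_card; under [in RHS]eq_bigr do rewrite -sum1dep_card.
  by rewrite pair_big_dep; apply: eq_bigl => -[x y].
rewrite (bigID (mem U)) /= [X in (_ + X)%N]big1 => [|x xNU]; last first.
  apply/eqP; rewrite cards_eq0; apply/eqP/setP => y; rewrite !inE.
  by apply: contraNF xNU => /SU.
by rewrite addn0 -sum_nat_const leq_sum.
Qed.

Section LambdaEquations.

Variables (F : fieldType) (s : {rmorphism F -> F}).
Hypotheses (pcharF : 2 \in [pchar F]) (s4 : forall x, s (s (s (s x))) = x).

Let two0 : 2%:R = 0 :> F := pcharf0 pcharF.

Lemma s2_fixed (a : F) : (a + s (s a)) * (s a + s (s (s a))) ^+ 2 = 0 -> s (s a) = a.
Proof.
move/eqP; rewrite mulf_eq0 expf_eq0 /= => /orP[|] /eqP /(addr_eq0_pchar2 pcharF).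
  exact: esym.
by move/(congr1 (s \o s \o s)) => /=; rewrite !s4.
Qed.

Lemma frobenius_system_unsolvable (a b A A' : F) : b = s a * a ->
  1 + s a + s (s A) = 0 -> s A' + s a + 1 + s (s b) = 0 ->
  s a * A' + A + s (s b) * A = 0 -> False.
Proof.
move=> -> r2 r1 r0.
(* Solve r2 and r1 for A and A'; then r0 + s^2 r0 factors, forcing s^2 a = a,
   after which r0 reads 1 = 0. *)
have hA : A = 1 + s (s (s a)).
  move/(congr1 (s \o s)): r2; rewrite /= !(rmorphD, rmorph1, rmorph0) s4 => r2.
  by apply/(addr_eq0_pchar2 pcharF); rewrite -r2; ring: two0.
have hA' : A' = 1 + a + s a * s (s a).
  move/(congr1 (s \o s \o s)): r1; rewrite /= !(rmorphD, rmorphM, rmorph1, rmorph0) !s4 => r1.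
  by apply/(addr_eq0_pchar2 pcharF); rewrite -r1; ring: two0.
rewrite hA hA' !(rmorphD, rmorphM) in r0.
have sr0 := congr1 (s \o s) r0; rewrite /= !(rmorphD, rmorphM, rmorph1, rmorph0) !s4 in sr0.
have s2a : s (s a) = a.
  apply: s2_fixed; apply: (lincomb2_eq0 (k1 := 1) (k2 := 1) r0 sr0).
  by ring: two0.
rewrite s2a in r0; have : (1 : F) = 0 by rewrite -r0; ring: two0.
by apply/eqP; rewrite oner_eq0.
Qed.

Variables (A B C D : F).
Hypotheses (B_neq0 : B != 0) (sB2 : s (s B) = B^-1).

Definition lambda_cubic := [:: B^-1 * A; B^-1; s (s A); 1].
Definition lambda_vcoef := s (B + D) * (B + D) + B.
Definition lambda_vrhs :=
  [:: s (B + D) * (A + C) + A; s (A + C) + s (B + D) + 1; 1 + s (B + D); 1].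
Definition lambda_quadratic :=
  [:: s (B + D) * (A + C) + A + B^-1 * A; s (A + C) + s (B + D) + 1 + B^-1;
      1 + s (B + D) + s (s A)].

Lemma lambda_quadratic_neq0 :
  lambda_vcoef = 0 -> has (fun r => r != 0) lambda_quadratic.
Proof.
move/(addr_eq0_pchar2 pcharF)/esym => B_eq.
rewrite /lambda_quadratic -sB2 /= orbF -!negb_and.
apply/negP => /and3P[/eqP r0 /eqP r1 /eqP r2].
exact: frobenius_system_unsolvable B_eq r2 r1 r0.
Qed.

Variables (u v : F).
Hypotheses (eq1 : s (s v) + A * u + B * v + s u = 0)
           (eq2 : s (s v) + s (s u) + s v + C * u + D * v = 0).

Lemma lambda_cubic_root : linearized s lambda_cubic u = 0.
Proof.
have s2eq1 := congr1 (s \o s) eq1.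
rewrite /= !(rmorphD, rmorphM, rmorph0) s4 sB2 in s2eq1.
have := congr1 (GRing.mul B^-1) eq1; rewrite mulr0 !mulrDr (mulKf B_neq0) => Beq1.
rewrite /lambda_cubic !linearized_cons linearized_nil /=.
apply: (lincomb2_eq0 (k1 := 1) (k2 := 1) s2eq1 Beq1).
by ring: two0.
Qed.

Lemma lambda_v_affine : linearized s [:: B + D; 1] v = linearized s [:: A + C; 1; 1] u.
Proof.
rewrite !linearized_cons !linearized_nil /=.
apply/(addr_eq0_pchar2 pcharF); apply: (lincomb2_eq0 (k1 := 1) (k2 := 1) eq1 eq2).
by ring: two0.
Qed.

Lemma lambda_v_linear : lambda_vcoef * v = linearized s lambda_vrhs u.
Proof.
have e3 := lambda_v_affine; rewrite !linearized_cons !linearized_nil /= in e3.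
have se3 := congr1 s e3; rewrite !(rmorphD, rmorphM, rmorph0, rmorph1) in e3 se3.
move: e3 se3 => /(addr_eq0_pchar2 pcharF) e3 /(addr_eq0_pchar2 pcharF) se3.
rewrite /lambda_vcoef /lambda_vrhs !linearized_cons linearized_nil /=.
apply/(addr_eq0_pchar2 pcharF).
apply: (lincomb3_eq0 (k1 := 1) (k2 := 1) (k3 := s (B + D)) se3 eq1 e3).
by ring: two0.
Qed.

Lemma lambda_quadratic_root : lambda_vcoef = 0 -> linearized s lambda_quadratic u = 0.
Proof.
move=> vcoef0; have := lambda_v_linear; rewrite vcoef0 mul0r => /esym vrhs0.
have cubic0 := lambda_cubic_root.
rewrite /lambda_cubic /lambda_vrhs !linearized_cons !linearized_nil /= in cubic0 vrhs0 *.
apply: (lincomb2_eq0 (k1 := 1) (k2 := 1) cubic0 vrhs0).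
by ring: two0.
Qed.

End LambdaEquations.

Section LambdaCard.

Variables (F : finFieldType) (q : nat).
Hypotheses (pcharF : 2 \in [pchar F]) (pcharq : [pchar F].-nat q).
Hypotheses (q_gt1 : (1 < q)%N) (card_F : #|F| = (q ^ 4)%N).

Local Notation s := (frobenius_pow pcharq).

Lemma frobenius_pow4 x : s (s (s (s x))) = x.
Proof.
rewrite !frobenius_powE -!exprM -{2}(expf_card x) card_F.
by congr (x ^+ _); rewrite !expnS expn0 muln1 !mulnA.
Qed.

Variables (A B C D : F).
Hypotheses (B_neq0 : B != 0) (hB : B ^+ (q ^ 2) = B^-1).

Let sB2 : s (s B) = B^-1.
Proof. by rewrite !frobenius_powE -exprM mulnn. Qed.

Lemma LambdaP u v : (u, v) \in Lambda q A B C D ->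
  s (s v) + A * u + B * v + s u = 0 /\ s (s v) + s (s u) + s v + C * u + D * v = 0.
Proof. by rewrite inE /= !frobenius_powE -!exprM mulnn => /andP[/eqP ? /eqP ?]. Qed.

Lemma card_Lambda_le_degenerate :
  lambda_vcoef s B D = 0 -> (#|Lambda q A B C D| <= q ^ 3)%N.
Proof.
move=> vcoef0; have s4 := frobenius_pow4.
have card_U := card_linearized_eq_le q_gt1 0 (lambda_quadratic_neq0 pcharF s4 A C sB2 vcoef0).
rewrite expnSr; apply: leq_trans (leq_mul card_U (leqnn q)).
apply: card_le_fibers => [u v /LambdaP[eq1 eq2] | u _].
  by rewrite inE (lambda_quadratic_root pcharF s4 B_neq0 sB2 eq1 eq2 vcoef0).
apply: (leq_trans _ (card_linearized_eq_le q_gt1 (c := [:: B + D; 1])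
  (linearized s [:: A + C; 1; 1] u) _)); last by rewrite /= oner_neq0 orbT.
apply/subset_leq_card/subsetP => v; rewrite inE => /LambdaP[eq1 eq2].
by rewrite inE (lambda_v_affine pcharF eq1 eq2).
Qed.

Lemma card_Lambda_le_generic :
  lambda_vcoef s B D != 0 -> (#|Lambda q A B C D| <= q ^ 3)%N.
Proof.
move=> vcoef_neq0; have s4 := frobenius_pow4.
have card_U : (#|[set u | linearized s (lambda_cubic s A B) u == 0%R]| <= q ^ 3)%N.
  by apply: card_linearized_eq_le => //=; rewrite oner_neq0 !orbT.
rewrite -[(q ^ 3)%N]muln1; apply: leq_trans (leq_mul card_U (leqnn 1)).
apply: card_le_fibers => [u v /LambdaP[eq1 eq2] | u _].
  by rewrite inE (lambda_cubic_root pcharF s4 B_neq0 sB2 eq1).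
rewrite -(cards1 ((lambda_vcoef s B D)^-1 * linearized s (lambda_vrhs s A B C D) u)).
apply/subset_leq_card/subsetP => v; rewrite inE => /LambdaP[eq1 eq2].
by rewrite inE -(lambda_v_linear pcharF eq1 eq2) mulKf.
Qed.

Lemma card_Lambda_le : (#|Lambda q A B C D| <= q ^ 3)%N.
Proof.
by have [/card_Lambda_le_degenerate|/card_Lambda_le_generic] := eqVneq (lambda_vcoef s B D) 0.
Qed.

End LambdaCard.

Theorem proposition4p3 (h : nat) (F : finFieldType)
  (hF : #|F| = ((2 ^ h) ^ 4)%N) (A B C D : F)
  (hB0 : B != 0) (hB : B ^+ ((2 ^ h) ^ 2)%N = B^-1) :
  (#|Lambda (2 ^ h)%N A B C D| <= (2 ^ h) ^ 3)%N.
Proof.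
have pcharF : 2 \in [pchar F].
  by apply: (card_finPcharP (n := (h * 4)%N)); rewrite ?hF ?expnM.
have pcharq : [pchar F].-nat (2 ^ h)%N.
  by rewrite (eq_pnat _ (pcharf_eq pcharF)) pnatX pnat_id.
have q_gt1 : (1 < 2 ^ h)%N.
  by move: (card_finNzRing_gt1 F); rewrite hF; case: (2 ^ h)%N => [|[]].
exact: card_Lambda_le pcharF pcharq q_gt1 hF _ _ _ _ hB0 hB.
Qed.
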